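(* Let $G$ be a connected simple graph with maximum degree at most $3$ and minimum degree at least $2$, in which no two adjacent vertices both have degree $3$. Let $M_1,M_2$ be disjoint matchings of $G$ such that $|M_1\cup M_2|$ is maximum over all pairs of disjoint matchings, and, subject to this, such that $G_{M_1,M_2}$ has the minimum number of connected components. Then there is no edge of $M_1\cup M_2$ joining a vertex of one component of $G_{M_1,M_2}$ that is a $P_3$ to a vertex of a different component of $G_{M_1,M_2}$ that is a $P_3$.
   Context: $G_{M_1,M_2}$ denotes the subgraph of $G$ induced by the edge set $E(G)\setminus(M_1\cup M_2)$. $P_k$ denotes a path on $k$ vertices. *)

From mathcomp Require Import all_boot.
Set Implicit Arguments. Unset Strict Implicit. Unset Printing Implicit Defensive.

Section Graph.
Variable T : finType.
Variable e : rel T.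

Definition simple_graph : Prop := symmetric e /\ irreflexive e.

Definition edges : {set {set T}} := [set [set x; y] | x in T, y in T & e x y].

Definition deg (x : T) : nat := #|[set y | e x y]|.

Definition connected_graph : Prop := forall x y : T, connect e x y.

Definition is_matching (M : {set {set T}}) : Prop :=
  M \subset edges /\
  (forall f g, f \in M -> g \in M -> f != g -> [disjoint f & g]).

(* G_{M1,M2}: the subgraph induced by the edge set E(G) \ (M1 u M2);
   its vertices are the endpoints of these edges. *)
Definition rem_edges (M1 M2 : {set {set T}}) : {set {set T}} :=
  edges :\: (M1 :|: M2).

Definition rem_vertices (M1 M2 : {set {set T}}) : {set T} :=
  [set x | [exists f in rem_edges M1 M2, x \in f]].

Definition rem_adj (M1 M2 : {set {set T}}) : rel T :=
  fun x y => [set x; y] \in rem_edges M1 M2.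

Definition rem_comp (M1 M2 : {set {set T}}) (x : T) : {set T} :=
  [set y | connect (rem_adj M1 M2) x y].

Definition rem_comps (M1 M2 : {set {set T}}) : {set {set T}} :=
  [set rem_comp M1 M2 x | x in rem_vertices M1 M2].

Definition ncomp (M1 M2 : {set {set T}}) : nat := #|rem_comps M1 M2|.

(* a component is a P_3: 3 vertices and (being connected) exactly 2 edges *)
Definition is_P3_comp (M1 M2 : {set {set T}}) (C : {set T}) : Prop :=
  #|C| = 3 /\ #|[set f in rem_edges M1 M2 | f \subset C]| = 2.

Definition disjoint_matchings (M1 M2 : {set {set T}}) : Prop :=
  is_matching M1 /\ is_matching M2 /\ [disjoint M1 & M2].

End Graph.

(* Let f = uv in M1 join two P3 components C1 (containing u) and C2 (containing v)
   of G_{M1,M2}. Then u has a neighbour w in C1, along an edge of G_{M1,M2}, that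
   M1 leaves uncovered: otherwise u and w are both covered by M1, one of them
   also by M2 (else uw could be added to M2), and the two edges of the P3 meet
   u and w at least three times, so deg u + deg w >= 6, which is impossible in a
   subcubic graph without adjacent vertices of degree 3. Likewise v has such a
   neighbour w' in C2, and replacing f by uw and vw' in M1 enlarges |M1 u M2|. *)

From mathcomp Require Import all_boot zify.

Set Implicit Arguments.
Unset Strict Implicit.
Unset Printing Implicit Defensive.

Lemma card_disjointU (X : finType) (A B : {set X}) :
  [disjoint A & B] -> #|A :|: B| = #|A| + #|B|.
Proof. by rewrite -setI_eq0 cardsU => /eqP ->; rewrite cards0 subn0. Qed.

Lemma coverU1 (X : finType) (A : {set X}) (P : {set {set X}}) :
  cover (A |: P) = A :|: cover P.
Proof. by rewrite /cover bigcup_setU big_set1. Qed.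

Lemma pairs_in_triple (X : finType) (C h1 h2 : {set X}) :
  #|C| = 3 -> h1 \subset C -> h2 \subset C -> #|h1| = 2 -> #|h2| = 2 ->
  h1 != h2 -> h1 :|: h2 = C /\ ~~ [disjoint h1 & h2].
Proof.
move=> C3 h1C h2C h1_2 h2_2 h12.
have sub12 : h1 :|: h2 \subset C by rewrite subUset h1C h2C.
have le3 : #|h1 :|: h2| <= 3 by rewrite -C3 subset_leq_card.
have lt2 : #|h1 :&: h2| < 2.
  rewrite ltnNge; apply: contra h12 => ge2.
  have /eqP <- : h1 :&: h2 == h1 by rewrite eqEcard subsetIl h1_2.
  by rewrite eqEcard subsetIr h2_2.
have := cardsUI h1 h2; rewrite h1_2 h2_2 => card4.
split; first by apply/eqP; rewrite eqEcard sub12 C3; lia.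
by rewrite -setI_eq0 -cards_eq0; lia.
Qed.

Lemma disjoint_set2 (X : finType) (x y : X) (A : {set X}) :
  [disjoint [set x; y] & A] = (x \notin A) && (y \notin A).
Proof. by rewrite disjoints_subset subUset !sub1set !inE. Qed.

Lemma disjointUr (X : finType) (A B C : {set X}) :
  [disjoint A & B :|: C] = [disjoint A & B] && [disjoint A & C].
Proof. by rewrite !disjoints_subset setCU subsetI. Qed.

Lemma disjointUl (X : finType) (A B C : {set X}) :
  [disjoint A :|: B & C] = [disjoint A & C] && [disjoint B & C].
Proof. by rewrite disjoint_sym disjointUr !(disjoint_sym C). Qed.

Section Graph.
Variables (T : finType) (e : rel T).
Hypothesis graph_e : simple_graph e.
Implicit Types (A B M N S : {set {set T}}) (f g h : {set T}) (u v w x : T).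

Definition incident S x : {set {set T}} :=
  S :&: [set g : {set T} | x \in g].

Definition rem_edges_within A B (C : {set T}) : {set {set T}} :=
  [set g in rem_edges e A B | g \subset C].

Definition maximum_pair A B : Prop :=
  forall N1 N2, disjoint_matchings e N1 N2 -> #|N1 :|: N2| <= #|A :|: B|.

Lemma in_incident S x g : (g \in incident S x) = (g \in S) && (x \in g).
Proof. by rewrite !inE. Qed.

Lemma in_rem_edges A B g :
  (g \in rem_edges e A B) = [&& g \notin A, g \notin B & g \in edges e].
Proof. by rewrite !inE negb_or andbA. Qed.

Lemma in_rem_edges_within A B C g :
  (g \in rem_edges_within A B C) = (g \in rem_edges e A B) && (g \subset C).
Proof. by rewrite inE. Qed.

Lemma edgesP g :
  reflect (exists x y, e x y /\ g = [set x; y]) (g \in edges e).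
Proof.
apply: (iffP imset2P) => [[x y _] | [x [y [exy ->]]]].
  by rewrite inE => /andP[_ exy] ->; exists x, y.
by exists x y; rewrite ?inE.
Qed.

Lemma edge_other_end g u :
  g \in edges e -> u \in g -> exists2 w, e u w & g = [set u; w].
Proof.
case: graph_e => sym_e _ /edgesP[x [y [exy ->]]].
rewrite in_set2 => /orP[] /eqP ->; first by exists y.
by exists x; rewrite 1?sym_e // setUC.
Qed.

Lemma card_edge g : g \in edges e -> #|g| = 2.
Proof.
case: graph_e => _ irr_e /edgesP[x [y [exy ->]]].
by rewrite cards2; case: eqP exy => [-> | //]; rewrite irr_e.
Qed.

Lemma set2_edgeP u w : reflect (e u w) ([set u; w] \in edges e).
Proof.
case: graph_e => sym_e irr_e.
apply: (iffP idP) => [uw_edge | euw]; last by apply/edgesP; exists u, w.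
have /eqP := card_edge uw_edge; rewrite cards2 eqSS eqb1 => uw.
have [w' euw' uw_eq] := edge_other_end uw_edge (set21 u w).
by have := set22 u w; rewrite uw_eq in_set2 eq_sym (negbTE uw) => /eqP ->.
Qed.

Lemma card_incident_edges x : #|incident (edges e) x| <= deg e x.
Proof.
have sub : incident (edges e) x \subset [set [set x; y] | y in [set y | e x y]].
  apply/subsetP => g; rewrite !inE => /andP[g_edge xg].
  have [y exy ->] := edge_other_end g_edge xg.
  by apply/imsetP; exists y; rewrite ?inE.
exact: leq_trans (subset_leq_card sub) (leq_imset_card _ _).
Qed.

Lemma card_incidentU (S1 S2 : {set {set T}}) x : [disjoint S1 & S2] ->
  #|incident (S1 :|: S2) x| = #|incident S1 x| + #|incident S2 x|.
Proof.
move=> dS; rewrite /incident setIUl card_disjointU //.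
exact: disjointWl (subsetIl _ _) (disjointWr (subsetIl _ _) dS).
Qed.

Lemma is_matchingE M : is_matching e M <-> M \subset edges e /\ trivIset M.
Proof. by split=> -[sM /trivIsetP tM]. Qed.

Lemma matchingS M N : N \subset M -> is_matching e M -> is_matching e N.
Proof.
move=> sNM /is_matchingE[sM tM]; apply/is_matchingE.
by split; [exact: subset_trans sM | exact: trivIsetS tM].
Qed.

Lemma matchingU1 M g : is_matching e M -> g \in edges e ->
  [disjoint g & cover M] -> is_matching e (g |: M).
Proof.
move=> /is_matchingE[sM tM] g_edge dgM; apply/is_matchingE.
by rewrite subUset sub1set g_edge sM; split=> //; apply: trivIsetU; rewrite ?trivIset1 ?cover1.
Qed.

Lemma matching_uniq M f g x : is_matching e M ->
  f \in M -> g \in M -> x \in f -> x \in g -> f = g.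
Proof.
case/is_matchingE=> _ /trivIsetP tM fM gM xf xg.
by apply/eqP; apply/negPn/negP => fg; rewrite (disjointFr (tM _ _ fM gM fg) xf) in xg.
Qed.

Lemma card_incident_matching M x :
  is_matching e M -> #|incident M x| = (x \in cover M).
Proof.
move=> mM; case: (boolP (x \in cover M)) => [/bigcupP[f fM xf] | xM].
  rewrite /= -(cards1 f); apply: eq_card => g; rewrite !inE.
  by apply/andP/eqP => [[gM xg] | ->]; [exact: matching_uniq mM gM fM xg xf | ].
rewrite (_ : incident M x = set0) ?cards0 //; apply/setP => g; rewrite !inE.
by apply: contraNF xM => /andP[gM xg]; apply/bigcupP; exists g.
Qed.

Lemma disjoint_matchingsC A B :
  disjoint_matchings e A B -> disjoint_matchings e B A.
Proof. by case=> mA [mB dAB]; rewrite /disjoint_matchings disjoint_sym. Qed.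

Lemma rem_edgesC A B : rem_edges e A B = rem_edges e B A.
Proof. by rewrite /rem_edges setUC. Qed.

Lemma maximum_pairC A B : maximum_pair A B -> maximum_pair B A.
Proof. by move=> maxAB N1 N2 /maxAB; rewrite [B :|: A]setUC. Qed.

Lemma deg_ge_cover A B x : disjoint_matchings e A B ->
  #|incident (rem_edges e A B) x| + (x \in cover A) + (x \in cover B) <= deg e x.
Proof.
case=> mA [mB dAB].
have sAB : A :|: B \subset edges e by rewrite subUset mA.1 mB.1.
have dR : [disjoint A :|: B & rem_edges e A B].
  by rewrite disjoint_sym disjoints_subset /rem_edges setDE subsetIr.
rewrite -(card_incident_matching x mA) -(card_incident_matching x mB).
rewrite -addnA -card_incidentU // addnC -card_incidentU // -(setIidPr sAB) /rem_edges setID.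
exact: card_incident_edges.
Qed.

Lemma rem_comps_disjoint A B C1 C2 :
  C1 \in rem_comps e A B -> C2 \in rem_comps e A B -> C1 != C2 ->
  [disjoint C1 & C2].
Proof.
have sym : connect_sym (rem_adj e A B).
  by apply: sym_connect_sym => x y; rewrite /rem_adj setUC.
case/imsetP=> x1 _ -> /imsetP[x2 _ ->]; apply: contraNT.
rewrite -setI_eq0 => /set0Pn[y]; rewrite !inE => /andP[c1 c2].
by apply/eqP/setP => z; rewrite !inE (same_connect sym c1) (same_connect sym c2).
Qed.

Section MaximumPair.
Variables A B : {set {set T}}.
Hypotheses (dmAB : disjoint_matchings e A B) (maxAB : maximum_pair A B).

Lemma maximum_pair_card N1 N2 :
  disjoint_matchings e N1 N2 -> #|N1| + #|N2| <= #|A| + #|B|.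
Proof.
move=> dN; rewrite -(card_disjointU dN.2.2) -(card_disjointU dmAB.2.2).
exact: maxAB.
Qed.

Lemma rem_edge_meets_cover g : g \in rem_edges e A B -> ~~ [disjoint g & cover B].
Proof.
rewrite in_rem_edges => /and3P[gA gB g_edge]; apply/negP => dgB.
have [mA [mB dAB]] := dmAB.
have dN : disjoint_matchings e A (g |: B).
  split=> //; split; first exact: matchingU1.
  by rewrite disjointUr dAB andbT disjoint_sym disjoints1.
by have := maximum_pair_card dN; rewrite cardsU1 gB /= add1n addnS ltnn.
Qed.

Lemma maximum_pair_no_exchange f h h' : f \in A ->
  h \in rem_edges e A B -> h' \in rem_edges e A B -> [disjoint h & h'] ->
  [disjoint h & cover (A :\ f)] -> [disjoint h' & cover (A :\ f)] -> False.
Proof.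
move=> fA hR h'R dhh' dhA dh'A.
have [mA [mB dAB]] := dmAB.
move: hR h'R; rewrite !in_rem_edges => /and3P[hA hB h_edge] /and3P[h'A h'B h'_edge].
have hh' : h != h'.
  apply: contraTneq dhh' => <-; rewrite -setI_eq0 setIid -cards_eq0.
  by rewrite (card_edge h_edge).
set N := h |: (h' |: A :\ f).
have mN : is_matching e N.
  apply: matchingU1; rewrite ?coverU1 ?disjointUr ?dhh' //.
  by apply: matchingU1 => //; exact: matchingS (subD1set A f) mA.
have dN : disjoint_matchings e N B.
  split=> //; split=> //.
  rewrite !disjointUl !disjoints1 hB h'B.
  exact: disjointWl (subD1set A f) dAB.
have := maximum_pair_card dN.
rewrite !cardsU1 !inE (negbTE hh') (negbTE hA) (negbTE h'A) !andbF (cardsD1 f A) fA /=.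
by rewrite !add1n addSn ltnn.
Qed.

Hypothesis deg_le3 : forall x, deg e x <= 3.
Hypothesis deg3_nonadjacent : forall x y, e x y -> ~ (deg e x = 3 /\ deg e y = 3).

Lemma P3_edge_uncovered C u w : is_P3_comp e A B C ->
  [set u; w] \in rem_edges_within A B C -> u \in cover A -> w \notin cover A.
Proof.
case=> C3; rewrite -/(rem_edges_within A B C) => S2 uwS uA; apply/negP => wA.
have [h hS] : exists h, h \in rem_edges_within A B C :\ [set u; w].
  apply/set0Pn; rewrite -card_gt0.
  by move: S2; rewrite (cardsD1 [set u; w] (rem_edges_within A B C)) uwS /= add1n => -[->].
move: hS uwS; rewrite in_setD1 !in_rem_edges_within => /and3P[h_uw hR hC] /andP[uwR uwC].
have uw_edge : [set u; w] \in edges e by move: uwR; rewrite in_rem_edges => /and3P[].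
have h_edge : h \in edges e by move: hR; rewrite in_rem_edges => /and3P[].
have uw_h : [set u; w] != h by rewrite eq_sym.
have [_] := pairs_in_triple C3 uwC hC (card_edge uw_edge) (card_edge h_edge) uw_h.
rewrite disjoint_set2 negb_and !negbK => meet.
have r3 : 3 <= #|incident (rem_edges e A B) u| + #|incident (rem_edges e A B) w|.
  rewrite -cardsUI; apply: (@leq_add 2 1).
    have := cards2 [set u; w] h; rewrite eq_sym h_uw => <-; apply: subset_leq_card.
    by rewrite subUset !sub1set !in_setU !in_incident uwR hR set21 set22 /=.
  by rewrite card_gt0; apply/set0Pn; exists [set u; w]; rewrite in_setI !in_incident uwR set21 set22.
have := rem_edge_meets_cover uwR; rewrite disjoint_set2 negb_and !negbK => Bcov.
have /set2_edgeP euw := uw_edge.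
have := deg_ge_cover u dmAB; have := deg_ge_cover w dmAB; rewrite uA wA.
have := deg_le3 u; have := deg_le3 w; have := deg3_nonadjacent euw.
by case/orP: Bcov => ->; clear -r3; lia.
Qed.

Lemma P3_free_neighbour C u : is_P3_comp e A B C -> u \in C -> u \in cover A ->
  exists2 w, [set u; w] \in rem_edges_within A B C & w \notin cover A.
Proof.
move=> P3C uC uA; have [C3 /eqP/cards2P[h1 [h2 [h12 S_eq]]]] := P3C.
have edge_in_C h : h \in [set h1; h2] -> [/\ h \in edges e, h \subset C & #|h| = 2].
  rewrite -S_eq -/(rem_edges_within A B C) in_rem_edges_within in_rem_edges.
  by case/andP=> /and3P[_ _ h_edge] hC; split=> //; exact: card_edge.
have [_ h1C h1_2] := edge_in_C _ (set21 h1 h2).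
have [_ h2C h2_2] := edge_in_C _ (set22 h1 h2).
have [cover_C _] := pairs_in_triple C3 h1C h2C h1_2 h2_2 h12.
have [h hS uh] : exists2 h, h \in [set h1; h2] & u \in h.
  move: uC; rewrite -cover_C in_setU => /orP[uh | uh].
  - by exists h1; rewrite ?set21.
  - by exists h2; rewrite ?set22.
have [h_edge _ _] := edge_in_C _ hS.
have [w _ h_eq] := edge_other_end h_edge uh.
have uwS : [set u; w] \in rem_edges_within A B C by rewrite -h_eq /rem_edges_within S_eq.
by exists w; last exact: P3_edge_uncovered P3C uwS uA.
Qed.

Lemma P3_comps_not_joined f u v C1 C2 : f \in A -> u \in f -> v \in f ->
  is_P3_comp e A B C1 -> is_P3_comp e A B C2 -> u \in C1 -> v \in C2 ->
  [disjoint C1 & C2] -> False.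
Proof.
move=> fA uf vf P3C1 P3C2 uC1 vC2 dC.
have cover_f x : x \in f -> x \in cover A by move=> xf; apply/bigcupP; exists f.
have [w uwS wA] := P3_free_neighbour P3C1 uC1 (cover_f u uf).
have [w' vwS w'A] := P3_free_neighbour P3C2 vC2 (cover_f v vf).
move: uwS vwS; rewrite !in_rem_edges_within => /andP[uwR uwC1] /andP[vwR vwC2].
have /is_matchingE[_ tA] := dmAB.1.
apply: (maximum_pair_no_exchange fA uwR vwR); rewrite ?(coverD1 tA fA).
- exact: disjointWl uwC1 (disjointWr vwC2 dC).
- by rewrite disjoint_set2 !in_setD uf (negbTE wA) andbF.
- by rewrite disjoint_set2 !in_setD vf (negbTE w'A) andbF.
Qed.

End MaximumPair.

End Graph.

Theorem lemma2 (T : finType) (e : rel T) (M1 M2 : {set {set T}}) :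
  simple_graph e ->
  connected_graph e ->
  (forall x : T, 2 <= deg e x <= 3) ->
  (forall x y : T, e x y -> ~ (deg e x = 3 /\ deg e y = 3)) ->
  disjoint_matchings e M1 M2 ->
  (forall N1 N2 : {set {set T}}, disjoint_matchings e N1 N2 ->
     #|N1 :|: N2| <= #|M1 :|: M2|) ->
  (forall N1 N2 : {set {set T}}, disjoint_matchings e N1 N2 ->
     #|N1 :|: N2| = #|M1 :|: M2| -> ncomp e M1 M2 <= ncomp e N1 N2) ->
  forall (f : {set T}) (C1 C2 : {set T}),
    f \in M1 :|: M2 ->
    C1 \in rem_comps e M1 M2 -> C2 \in rem_comps e M1 M2 ->
    C1 != C2 ->
    is_P3_comp e M1 M2 C1 -> is_P3_comp e M1 M2 C2 ->
    ~ ([exists u in f, u \in C1] && [exists v in f, v \in C2]).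
Proof.
move=> graph_e _ deg_bounds deg3_nonadj dmM maxM _ f C1 C2 fM C1c C2c C12 P3C1 P3C2.
case/andP=> /existsP[u /andP[uf uC1]] /existsP[v /andP[vf vC2]].
have dC := rem_comps_disjoint C1c C2c C12.
have deg_le3 x : deg e x <= 3 by case/andP: (deg_bounds x).
have {}maxM : maximum_pair e M1 M2 := maxM.
case/setUP: fM => fM.
  exact: (P3_comps_not_joined graph_e dmM maxM deg_le3 deg3_nonadj
            fM uf vf P3C1 P3C2 uC1 vC2 dC).
by apply: (P3_comps_not_joined graph_e (disjoint_matchingsC dmM) (maximum_pairC maxM)
          deg_le3 deg3_nonadj fM uf vf _ _ uC1 vC2 dC); rewrite /is_P3_comp rem_edgesC.
Qed.
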